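(* Let $m\ge2$ and let $G:\mathbb{R}^{m(m-1)/2}\to\mathbb{S}^m$ be defined by $G(x)=I+\sum_{1\le i<j\le m}A^{ij}x_{ij}$, where the components of $x$ are indexed by pairs $(i,j)$ with $1\le i<j\le m$. Then every $x$ with $G(x)\in\mathbb{S}^m_+$ is nondegenerate, i.e. $$\mathbb{S}^m=\operatorname{lin}\mathcal{T}_{\mathbb{S}^m_+}(G(x))+\operatorname{Im}\nabla G(x).$$
   Context: $\mathbb{S}^m$ is the space of real symmetric $m\times m$ matrices and $\mathbb{S}^m_+$ the cone of positive semidefinite ones. $A^{ij}$ denotes the $m\times m$ matrix with $1$ in the $(i,j)$ and $(j,i)$ entries and $0$ elsewhere. $\mathcal{T}_{\mathbb{S}^m_+}(Y)$ is the tangent cone of $\mathbb{S}^m_+$ at $Y$, $\operatorname{lin}K=K\cap(-K)$ is the lineality space of a cone $K$, and $\operatorname{Im}\nabla G(x)$ is the image of the derivative $\nabla G(x):\mathbb{R}^{m(m-1)/2}\to\mathbb{S}^m$, $v\mapsto\sum_{i<j}v_{ij}A^{ij}$. (This is the constraint of the closest correlation matrix problem: minimize $\sum_{i<j}(H_{ij}-x_{ij})^2$ subject to $G(x)\in\mathbb{S}^m_+$, for a given symmetric $H$.) *)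

From HB Require Import structures.
From mathcomp Require Import all_boot all_order all_algebra.
From mathcomp Require Import reals.
Set Implicit Arguments. Unset Strict Implicit. Unset Printing Implicit Defensive.
Import Order.TTheory GRing.Theory Num.Theory.
Local Open Scope ring_scope.

(* Index set {(i,j) : 1 <= i < j <= m} (0-based here); R^{m(m-1)/2} = pairs m -> R *)
Definition pairs (m : nat) : finType := {p : 'I_m * 'I_m | (p.1 < p.2)%N}.

Definition symmx (R : realType) (m : nat) (A : 'M[R]_m) : Prop := A^T = A.

Definition psdmx (R : realType) (m : nat) (A : 'M[R]_m) : Prop :=
  symmx A /\ forall v : 'cV[R]_m, 0 <= (v^T *m A *m v) 0 0.

Definition Aij (R : realType) (m : nat) (i j : 'I_m) : 'M[R]_m :=
  \matrix_(k, l) (((k == i) && (l == j)) || ((k == j) && (l == i)))%:R.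

Definition Gmap (R : realType) (m : nat) (x : pairs m -> R) : 'M[R]_m :=
  1%:M + \sum_(p : pairs m) x p *: Aij R (val p).1 (val p).2.

(* nabla G(x) v = sum_{i<j} v_ij A^{ij} (independent of x, since G is affine) *)
Definition DGmap (R : realType) (m : nat) (x : pairs m -> R) (v : pairs m -> R)
  : 'M[R]_m :=
  \sum_(p : pairs m) v p *: Aij R (val p).1 (val p).2.

Definition mx_close (R : realType) (m : nat) (A B : 'M[R]_m) (e : R) : Prop :=
  forall k l, `|A k l - B k l| < e.

(* Bouligand (contingent) tangent cone of K (a subset of S^m) at Y, inside S^m:
   D in T_K(Y) iff there are t_k -> 0+, D_k -> D (in S^m) with Y + t_k D_k in K,
   written in epsilon-delta form. *)
Definition tangent_cone (R : realType) (m : nat) (K : 'M[R]_m -> Prop)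
  (Y : 'M[R]_m) (D : 'M[R]_m) : Prop :=
  symmx D /\
  forall eps delta : R, 0 < eps -> 0 < delta ->
    exists (t : R) (D' : 'M[R]_m),
      [/\ 0 < t, t < delta, symmx D', mx_close D' D eps & K (Y + t *: D')].

Definition lineality (R : realType) (m : nat) (C : 'M[R]_m -> Prop)
  (D : 'M[R]_m) : Prop := C D /\ C (- D).

(** Congruence [Y |-> P^T Y P] preserves positive semidefiniteness, and
    [Y + t (M^T Y + Y M + t M^T Y M) = (1 + t M)^T Y (1 + t M)], so
    [M^T Y + Y M] and (taking [-M]) its opposite are tangent to [S^m_+] at any
    psd [Y]: they lie in the lineality space. When [Y = G(x)] has unit diagonal
    and [M = diag d], [M^T Y + Y M] has diagonal [2 d]; choosing [d] matches
    the diagonal of a given symmetric [S], and the remaining symmetric matrix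
    with zero diagonal is [nabla G(x) v] for [v] its upper-triangular entries. *)
From HB Require Import structures.
From mathcomp Require Import all_boot all_order all_algebra.
From mathcomp Require Import reals.
Set Implicit Arguments. Unset Strict Implicit. Unset Printing Implicit Defensive.
Import Order.TTheory GRing.Theory Num.Theory.
Local Open Scope ring_scope.

Section TangentCone.

Variables (R : realType) (m : nat).
Implicit Types (Y M P C : 'M[R]_m).

Lemma psdmx_congr Y P : psdmx Y -> psdmx (P^T *m Y *m P).
Proof.
move=> [sY pY]; split; first by rewrite /symmx !trmx_mul trmxK sY mulmxA.
move=> v; have -> : v^T *m (P^T *m Y *m P) *m v = (P *m v)^T *m Y *m (P *m v).
  by rewrite trmx_mul !mulmxA.
exact: pY.
Qed.

Lemma mx_entry_bound C : exists2 c : R, 0 < c & forall k l, `|C k l| <= c.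
Proof.
exists (1 + \sum_k \sum_l `|C k l|).
  by rewrite ltr_wpDr // sumr_ge0 // => k _; rewrite sumr_ge0.
move=> k l; rewrite (bigD1 k) //= (bigD1 l) //= -addrA ler_wpDl //.
by rewrite ler_wpDr // ?addr_ge0 ?sumr_ge0 // => *; rewrite sumr_ge0.
Qed.

Lemma exists_small_pos (c eps delta : R) : 0 < c -> 0 < eps -> 0 < delta ->
  exists t : R, [/\ 0 < t, t < delta & t * c < eps].
Proof.
move=> c0 e0 d0; set s := Num.min delta (eps / c).
have s0 : 0 < s by rewrite lt_min d0 divr_gt0.
have s_delta : s <= delta by rewrite ge_min lexx.
have s_eps : s * c <= eps by rewrite -ler_pdivlMr // ge_min lexx orbT.
have half_lt (a : R) : 0 < a -> a / 2 < a.
  by move=> a0; rewrite ltr_pdivrMr // ltr_pMr // ltr1n.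
exists (s / 2); split; first by rewrite divr_gt0.
- exact: lt_le_trans (half_lt _ s0) s_delta.
- by rewrite mulrAC (lt_le_trans _ s_eps) // half_lt // mulr_gt0.
Qed.

Lemma tangent_cone_congr Y M :
  psdmx Y -> tangent_cone (@psdmx R m) Y (M^T *m Y + Y *m M).
Proof.
move=> psdY; have [sY _] := psdY; split.
  by rewrite /symmx linearD /= !trmx_mul trmxK sY addrC.
move=> eps delta e0 d0; set C := M^T *m Y *m M.
have [c c0 Cc] := mx_entry_bound C.
have [t [t0 t_lt tc_lt]] := exists_small_pos c0 e0 d0.
exists t, (M^T *m Y + Y *m M + t *: C); split => //.
- rewrite /symmx !linearD /= linearZ /= /C !trmx_mul !trmxK sY mulmxA.
  by rewrite [Y *m M + _]addrC.
- move=> k l; rewrite [X in X - _]mxE addrC addrK mxE normrM gtr0_norm //.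
  by apply: le_lt_trans tc_lt; rewrite ler_pM2l.
- have -> : Y + t *: (M^T *m Y + Y *m M + t *: C)
      = (1%:M + t *: M)^T *m Y *m (1%:M + t *: M).
    rewrite [(_ + _)^T]linearD /= trmx1 linearZ /= /C !mulmxDl !mulmxDr !mul1mx !mulmx1.
    rewrite -!scalemxAl -!scalemxAr !scalerDr !scalerA.
    by rewrite -!addrA; congr (_ + _); rewrite addrCA.
  exact: psdmx_congr.
Qed.

Lemma lineality_congr Y M :
  psdmx Y -> lineality (tangent_cone (@psdmx R m) Y) (M^T *m Y + Y *m M).
Proof.
move=> psdY; split; first exact: tangent_cone_congr.
rewrite opprD -mulNmx -mulmxN -linearN; exact: tangent_cone_congr.
Qed.

End TangentCone.

Section CorrelationConstraint.

Variables (R : realType) (m : nat).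
Implicit Types (x v : pairs m -> R) (N : 'M[R]_m).

Lemma trmx_Aij (i j : 'I_m) : (Aij R i j)^T = Aij R i j.
Proof.
apply/matrixP => k l.
by rewrite !mxE orbC [(l == j) && _]andbC [(l == i) && _]andbC.
Qed.

Lemma DGmap_sym x v : symmx (DGmap x v).
Proof.
rewrite /symmx /DGmap linear_sum; apply: eq_bigr => p _.
by rewrite linearZ /= trmx_Aij.
Qed.

Lemma Aij_diag (i j k : 'I_m) : i != j -> Aij R i j k k = 0.
Proof.
move=> /negbTE ij; rewrite mxE; case: (k =P i) => [-> | _] /=.
  by rewrite ij.
by rewrite andbF.
Qed.

Lemma DGmap_diag x v k : DGmap x v k k = 0.
Proof.
rewrite summxE big1 // => [[[i j] /= ij]] _.
by rewrite mxE Aij_diag ?mulr0 // -val_eqE ltn_eqF.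
Qed.

Lemma Gmap_DGmap x : Gmap x = 1%:M + DGmap x x.
Proof. by []. Qed.

Lemma Gmap_diag x k : Gmap x k k = 1.
Proof. by rewrite Gmap_DGmap mxE DGmap_diag addr0 mxE eqxx. Qed.

Lemma DGmap_lt x v (k l : 'I_m) (kl : (k < l)%N) :
  DGmap x v k l = v (exist _ (k, l) kl).
Proof.
rewrite summxE (bigD1 (exist _ (k, l) kl)) //= !mxE !eqxx mulr1 big1 ?addr0 //.
move=> [[i j] /= ij] ne; rewrite !mxE.
have [/andP[/eqP ki /eqP lj] | _] := boolP ((k == i) && (l == j)).
  by case/eqP: ne; apply: val_inj; rewrite /= ki lj.
have [/andP[/eqP kj /eqP li] | _] := boolP ((k == j) && (l == i)).
  by move: (kl); rewrite kj li ltnNge (ltnW ij).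
by rewrite mulr0.
Qed.

Lemma DGmap_upper x N : symmx N -> (forall k, N k k = 0) ->
  DGmap x (fun p => N (val p).1 (val p).2) = N.
Proof.
move=> sN dN; apply/matrixP => k l.
have [kl | lk | /val_inj <-] := ltngtP k l.
- exact: DGmap_lt.
- rewrite -[DGmap _ _]DGmap_sym mxE (DGmap_lt _ _ lk).
  by have /matrixP/(_ k l) := sN; rewrite mxE.
- by rewrite DGmap_diag dN.
Qed.

End CorrelationConstraint.

Lemma congr_diag_mx_diag (R : ringType) (m : nat) (Y : 'M[R]_m) (d : 'rV_m) k :
  Y k k = 1 -> ((diag_mx d)^T *m Y + Y *m diag_mx d) k k = d 0 k *+ 2.
Proof.
by move=> Ykk; rewrite tr_diag_mx mul_diag_mx mul_mx_diag !mxE Ykk mulr1 mul1r.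
Qed.

Theorem proposition5p2 (R : realType) (m : nat) (hm : (2 <= m)%N)
  (x : pairs m -> R) (hx : psdmx (@Gmap R m x)) :
  forall S : 'M[R]_m,
    symmx S <->
    exists (L : 'M[R]_m) (v : pairs m -> R),
      lineality (tangent_cone (@psdmx R m) (@Gmap R m x)) L /\
      S = L + @DGmap R m x v.
Proof.
move=> S; split=> [sS | [L [v [[[sL _] _] ->]]]]; last first.
  by rewrite /symmx linearD /= sL DGmap_sym.
pose M := diag_mx (\row_k (S k k / 2)).
pose L := M^T *m Gmap x + Gmap x *m M.
have linL : lineality (tangent_cone (@psdmx R m) (Gmap x)) L.
  exact: lineality_congr.
have [[sL _] _] := linL.
have sN : symmx (S - L) by rewrite /symmx linearB /= sS sL.
have dN k : (S - L) k k = 0.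
  rewrite mxE [(- L) k k]mxE [L k k]congr_diag_mx_diag ?Gmap_diag //.
  by rewrite mxE mulr2n -splitr subrr.
exists L, (fun p => (S - L) (val p).1 (val p).2); split=> //.
by rewrite DGmap_upper // addrC subrK.
Qed.
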